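(* Under the hypotheses of Theorem 7.7 (restated: $(\mathcal{F}_\lambda)$ a coherent family, $t:\mathbb{F}_q\to\mathbb{F}_\mathfrak{l}$ the trace function of $\mathcal{F}=\mathcal{F}_\lambda$, $\mathcal{I}$ a family of sums with $\mathcal{F}$ being $\bigcup_{k\in\mathcal{I}}\mathcal{I}(k)$-compatible), we have \[\Phi(t,\mathcal{I}',a)=\frac1{|\mathbb{F}_\mathfrak{l}|}+O\big(V(t,\mathcal{I})^{1/2}\big)\] uniformly in $a\in\mathbb{F}_\mathfrak{l}$, where $\Phi(t,\mathcal{I}',a)=\frac1q\sum_{x\in\mathbb{F}_q}\Phi(t,\mathcal{I}+x,a)=\frac{|\{(k,x)\in\mathcal{I}\times\mathbb{F}_q: S(t,\mathcal{I}(k)+x)\equiv a\}|}{q|\mathcal{I}|}$.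
   Context: Notation: $S(t,E)=\sum_{y\in E}t(y)$; a family of sums is a finite set $\mathcal{I}$ with an injective map $k\mapsto\mathcal{I}(k)\subset\mathbb{F}_q$; $\Phi(t,\mathcal{I}+x,a)=|\{k\in\mathcal{I}:S(t,\mathcal{I}(k)+x)\equiv a\}|/|\mathcal{I}|$; $V(t,\mathcal{I})=\sum_{a\in\mathbb{F}_\mathfrak{l}}\frac1q\sum_{x\in\mathbb{F}_q}(\Phi(t,\mathcal{I}+x,a)-|\mathbb{F}_\mathfrak{l}|^{-1})^2$. Coherent family: irreducible sheaves $\mathcal{F}_\lambda$ of $\mathbb{F}_\mathfrak{l}$-modules on $\mathbb{P}^1_{\mathbb{F}_{q(\lambda)}}$ ($\ell$-adic middle-extension sheaves, i.e. Galois representations of $\mathrm{Gal}(\mathbb{F}_q(T)^{sep}/\mathbb{F}_q(T))$) with uniformly bounded conductor, and either all Kummer sheaves $\mathcal{L}_{\chi(f)}$ (trace function $\chi\circ f\bmod\mathfrak{l}$) with monodromy $\mu_d(\mathbb{F}_\mathfrak{l})$; or $d$ prime, arithmetic = geometric monodromy $\mu_d(\mathbb{F}_\mathfrak{l})$, no geometric isomorphism $[+a]^*\mathcal{F}_\lambda\cong\mathcal{F}_\lambda^{\otimes i}$ ($1\le i<d$, $a\neq0$); or arithmetic = geometric monodromy conjugate to $\mathrm{SL}_n(\mathbb{F}_\mathfrak{l})$ or $\mathrm{Sp}_n(\mathbb{F}_\mathfrak{l})$ ($n$ even) and no geometric isomorphism $[+a]^*\mathcal{F}_\lambda\cong\mathcal{L}\otimes\sigma(\mathcal{F}_\lambda)$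 or $\mathcal{L}\otimes D(\sigma(\mathcal{F}_\lambda))$ ($a\ne0$, $\sigma\in\mathrm{Aut}(\mathbb{F}_\mathfrak{l})$, $\mathcal{L}$ rank one). $E$-compatibility is automatic except for Kummer sheaves $\mathcal{L}_{\chi(f_1/f_2)}$, where it means $\sum_{i=1}^mx_i\ne0$ for $x_i\in E$, $1\le m\le\deg f_1$. *)

From HB Require Import structures.
From mathcomp Require Import all_boot all_order all_algebra all_field.
Set Implicit Arguments. Unset Strict Implicit. Unset Printing Implicit Defensive.
Import Order.TTheory GRing.Theory Num.Theory.
Local Open Scope ring_scope.

(* K plays the role of F_q, L the role of the coefficient field F_l,
   t : K -> L a function (trace function), Ind the index set of a
   family of sums, Ifam : Ind -> {set K} the (injective) map k |-> I(k). *)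

Definition Ssum (K L : finFieldType) (t : K -> L) (E : {set K}) : L :=
  \sum_(y in E) t y.

Definition shift (K : finFieldType) (E : {set K}) (x : K) : {set K} :=
  [set y + x | y in E].

Definition Phi (R : rcfType) (K L : finFieldType) (Ind : finType)
  (Ifam : Ind -> {set K}) (t : K -> L) (x : K) (a : L) : R :=
  (#|[set k : Ind | Ssum t (shift (Ifam k) x) == a]|)%:R / (#|Ind|)%:R.

Definition Phi' (R : rcfType) (K L : finFieldType) (Ind : finType)
  (Ifam : Ind -> {set K}) (t : K -> L) (a : L) : R :=
  (#|K|)%:R^-1 * \sum_(x : K) Phi R Ifam t x a.

Definition Vvar (R : rcfType) (K L : finFieldType) (Ind : finType)
  (Ifam : Ind -> {set K}) (t : K -> L) : R :=
  \sum_(a : L) ((#|K|)%:R^-1 *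
     \sum_(x : K) (Phi R Ifam t x a - (#|L|)%:R^-1) ^+ 2).

From HB Require Import structures.
From mathcomp Require Import all_boot all_order all_algebra all_field.
From mathcomp Require Import ring.
Set Implicit Arguments. Unset Strict Implicit. Unset Printing Implicit Defensive.
Import Order.TTheory GRing.Theory Num.Theory.
Local Open Scope ring_scope.

(* Phi(t, I', a) - 1/|F_l| is the mean over x of the deviations
   Phi(t, I + x, a) - 1/|F_l|.  By Jensen (Cauchy-Schwarz) its square is at
   most the mean of the squared deviations, which is the a-th summand of
   V(t, I); so the bound holds with C = 1, and none of the sheaf-theoretic
   hypotheses of Theorem 7.7 is needed. *)

Definition mean (R : fieldType) (T : finType) (f : T -> R) : R :=
  #|T|%:R^-1 * \sum_x f x.

Lemma sum_mean_sub_sqr (R : numFieldType) (T : finType) (f : T -> R) :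
  (0 < #|T|)%N ->
  \sum_x (f x - mean f) ^+ 2 = \sum_x f x ^+ 2 - #|T|%:R * mean f ^+ 2.
Proof.
move=> T_gt0; set m := mean f; set n : R := #|T|%:R.
have n_neq0 : n != 0 by rewrite pnatr_eq0 -lt0n.
have sum_f : \sum_x f x = n * m by rewrite /m /mean mulVKf.
under eq_bigr => x _ do rewrite sqrrB -mulr_natr.
rewrite !big_split /= sumrN sumr_const -mulr_natr -!mulr_suml -/n sum_f.
ring.
Qed.

Lemma sqr_mean_le_mean_sqr (R : realFieldType) (T : finType) (f : T -> R) :
  (0 < #|T|)%N -> mean f ^+ 2 <= mean (fun x => f x ^+ 2).
Proof.
move=> T_gt0; have n_gt0 : 0 < #|T|%:R :> R by rewrite ltr0n.
have : 0 <= \sum_x (f x - mean f) ^+ 2 by apply: sumr_ge0 => x _; exact: sqr_ge0.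
rewrite sum_mean_sub_sqr // subr_ge0 => le_n_sum.
by rewrite -(ler_pM2l n_gt0) {2}/mean mulVKf ?gt_eqF.
Qed.

Lemma norm_mean_le_sqrt_mean_sqr (R : rcfType) (T : finType) (f : T -> R) :
  (0 < #|T|)%N -> `|mean f| <= Num.sqrt (mean (fun x => f x ^+ 2)).
Proof. by move=> T_gt0; rewrite -sqrtr_sqr ler_wsqrtr ?sqr_mean_le_mean_sqr. Qed.

Lemma mean_subr (R : numFieldType) (T : finType) (f : T -> R) (c : R) :
  (0 < #|T|)%N -> mean (fun x => f x - c) = mean f - c.
Proof.
move=> T_gt0; rewrite /mean sumrB sumr_const mulrBr -[c *+ _]mulr_natl.
by rewrite mulKf // pnatr_eq0 -lt0n.
Qed.

Lemma mean_ge0 (R : numFieldType) (T : finType) (f : T -> R) :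
  (forall x, 0 <= f x) -> 0 <= mean f.
Proof. by move=> f_ge0; rewrite mulr_ge0 ?invr_ge0 ?ler0n ?sumr_ge0. Qed.

Lemma Phi'_mean (R : rcfType) (K L : finFieldType) (Ind : finType)
    (Ifam : Ind -> {set K}) (t : K -> L) (a : L) :
  Phi' R Ifam t a = mean (fun x => Phi R Ifam t x a).
Proof. by []. Qed.

Lemma mean_sqr_dev_le_Vvar (R : rcfType) (K L : finFieldType) (Ind : finType)
    (Ifam : Ind -> {set K}) (t : K -> L) (a : L) :
  mean (fun x => (Phi R Ifam t x a - #|L|%:R^-1) ^+ 2) <= Vvar R Ifam t.
Proof.
rewrite [Vvar _ _ _](bigD1 a) //= lerDl.
by apply: sumr_ge0 => b _; apply: mean_ge0 => x; apply: sqr_ge0.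
Qed.

Theorem corollary7p8 (R : rcfType) :
  exists C : R, 0 < C /\
  forall (K L : finFieldType) (Ind : finType) (Ifam : Ind -> {set K})
         (t : K -> L),
    injective Ifam -> (0 < #|Ind|)%N ->
    forall a : L,
      `| Phi' R Ifam t a - (#|L|)%:R^-1 | <= C * Num.sqrt (Vvar R Ifam t).
Proof.
exists 1; split => // K L Ind Ifam t _ _ a.
have K_gt0 : (0 < #|K|)%N by apply/card_gt0P; exists 0.
rewrite mul1r Phi'_mean -mean_subr //.
apply: le_trans (norm_mean_le_sqrt_mean_sqr _ K_gt0) _.
by rewrite ler_wsqrtr ?mean_sqr_dev_le_Vvar.
Qed.
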